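(* Let $\underline{X}=(X_n,p_n)$ and $\underline{Y}=(Y_n,q_n)$ be inverse sequences of sets, let $(f_n,\Phi):\underline{X}\to\underline{Y}$ be a morphism of inverse sequences, let $(t_k)_{k\ge1}$ be integers with $t_1>\Phi(1),\Phi(2)$, $t_k>t_{k-1},\Phi(k+1)$ for $k\ge2$, and $f_i\circ p_{\Phi(i)t_k}=q_{i,k+1}\circ f_{k+1}\circ p_{\Phi(k+1)t_k}$ for all $i\le k$, and let $\hat f:(T_{\underline{X}},v)\to(T_{\underline{Y}},w)$ be the map defined below. Then $\hat f$ is non-expansive, i.e. $d(\hat f(x),\hat f(x'))\le d(x,x')$ for all $x,x'\in T_{\underline{X}}$.
   Context: For an inverse sequence of sets $(X_n,p_n)_{n\ge1}$ ($p_n:X_{n+1}\to X_n$, $p_{nm}=p_n\circ\cdots\circ p_{m-1}:X_m\to X_n$ for $n<m$, $p_{nn}=\mathrm{id}$), the tree $T_{\underline{X}}$ is the geometric realization of the graph with vertex set $\{v\}\sqcup\bigsqcup_n X_n$ and edges $\{x,p_n(x)\}$ for $x\in X_{n+1}$ and $\{x,v\}$ for $x\in X_1$, each edge of length 1, with the path metric, rooted at $v$; vertices of $X_n$ are at distance $n$ from $v$. Similarly $(T_{\underline{Y}},w)$. A morphism $(f_n,\Phi)$ consists of $\Phi:\mathbb{N}\to\mathbb{N}$ and maps $f_n:X_{\Phi(n)}\to Y_n$ such that for all $n'>n$ there is $m\ge\Phi(n),\Phi(n')$ with $f_n\circ p_{\Phi(n)m}=q_{nn'}\circ f_{n'}\circ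 p_{\Phi(n')m}$. Definition of $\hat f$: let $x\in T_{\underline{X}}$ with $t=d(v,x)$, and for each integer $j\le t$ let $x_j$ be the vertex of $X_j$ lying on the arc $[v,x]$. If $t\le t_1$ put $\hat f(x)=w$. If $t_k\le t\le t_{k+1}$ with $k\ge1$, put $y_0=w$ and $y_j=f_j(x_{\Phi(j)})\in Y_j$ for $j\ge1$; then $y_{k-1},y_k$ are adjacent vertices of $T_{\underline{Y}}$, and $\hat f(x)$ is the point of the edge $[y_{k-1},y_k]$ at distance $\frac{t-t_k}{t_{k+1}-t_k}$ from $y_{k-1}$. *)

From HB Require Import structures.
From mathcomp Require Import all_boot all_order all_algebra.
From mathcomp Require Import boolp reals.
Set Implicit Arguments. Unset Strict Implicit. Unset Printing Implicit Defensive.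
Import Order.TTheory GRing.Theory Num.Theory.

(* An inverse sequence of sets (X_n, p_n)_{n >= 1} is given by
   X : nat -> Type (only the levels n >= 1 are used; X 0 is irrelevant)
   and p n : X (n+1) -> X n. *)

Section InverseSequence.
Variables (X : nat -> Type) (p : forall n, X n.+1 -> X n).

Fixpoint pk (n k : nat) : X (k + n) -> X n :=
  match k return X (k + n) -> X n with
  | 0 => fun x => x
  | k'.+1 => fun x => @pk n k' (@p (k' + n) x)
  end.

Definition pp (n m : nat) (H : (n <= m)%N) (x : X m) : X n :=
  @pk n (m - n) (eq_rect m X x _ (esym (subnK H))).

Definition ppo (n m : nat) (x : X m) : option (X n) :=
  (if (n <= m)%N as b return ((n <= m)%N = b -> option (X n))
   then fun H => Some (pp H x) else fun _ => None) erefl.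

Local Open Scope ring_scope.
Variable R : realType.

(* Points of the tree T_X (geometric realization, edges of length 1):
   - Root is the root vertex v;
   - Pt n x s (n >= 1, x in X n, 0 <= s < 1) is the point of the edge
     [x, p_{n-1}(x)] (resp. [x, v] if n = 1) at distance s from x. *)
Inductive point : Type :=
| Root : point
| Pt : forall n : nat, X n -> R -> point.

Definition valid_point (a : point) : Prop :=
  match a with
  | Root => True
  | Pt n _ s => (0 < n)%N /\ 0 <= s /\ s < 1
  end.

Definition depth (a : point) : R :=
  match a with
  | Root => 0
  | Pt n _ s => n%:R - s
  end.

(* largest level j >= 1 at which the vertex arcs [v,x] and [v,y] agree
   (0 if none) *)
Definition common_level (n : nat) (x : X n) (m : nat) (y : X m) : nat :=
  (\max_(0 <= j < (minn n m).+1 | (0 < j)%N && `[< ppo j x = ppo j y >]) j)%N.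

(* d(v, a /\ b): length of the common part of the arcs [v,a] and [v,b] *)
Definition gromov (a b : point) : R :=
  match a, b with
  | Pt n x _, Pt m y _ =>
      Num.min (depth a) (Num.min (depth b) (common_level x y)%:R)
  | _, _ => 0
  end.

(* The path metric of the tree T_X (tree formula
   d(a,b) = d(v,a) + d(v,b) - 2 d(v, a /\ b)). *)
Definition tdist (a b : point) : R := depth a + depth b - 2 * gromov a b.

End InverseSequence.

Arguments pp {X} p n m H x.
Arguments ppo {X} p n {m} x.
Arguments Root {X R}.
Arguments Pt {X R} n x s.

Section Morphism.
Variables (X : nat -> Type) (p : forall n, X n.+1 -> X n).
Variables (Y : nat -> Type) (q : forall n, Y n.+1 -> Y n).
Variables (Phi : nat -> nat) (f : forall n, X (Phi n) -> Y n).
Arguments f : clear implicits.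

Definition is_morphism : Prop :=
  (forall n, (0 < n)%N -> (0 < Phi n)%N) /\
  forall n n' (Hnn' : (n <= n')%N), (0 < n)%N -> (n < n')%N ->
    exists m, exists H1 : (Phi n <= m)%N, exists H2 : (Phi n' <= m)%N,
      forall z : X m, f n (pp p (Phi n) m H1 z) = pp q n n' Hnn' (f n' (pp p (Phi n') m H2 z)).

Variables (t : nat -> nat) (R : realType).
Local Open Scope ring_scope.

(* For a point a with t = d(v,a):
   k = #{j >= 1 | t_j <= t}  (so t_k <= t < t_{k+1} when k >= 1,
   and k = 0 iff t < t_1); lam = (t - t_k)/(t_{k+1} - t_k);
   y_j = f_j(x_{Phi j}), y_0 = w; the image is the point of the edge
   [y_{k-1}, y_k] at distance lam from y_{k-1}. *)
Definition hatf (a : point X R) : point Y R :=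
  match a with
  | Root => Root
  | Pt n x s =>
      let d := n%:R - s in
      let k := (\sum_(1 <= j < n.+1) (((t j)%:R <= d)%R : nat))%N in
      if k == 0%N then Root else
      let lam := (d - (t k)%:R) / ((t k.+1)%:R - (t k)%:R) in
      if lam == 0 then
        (* the vertex y_{k-1} *)
        (if k == 1%N then Root else
         match ppo p (Phi k.-1) x with
         | Some z => Pt k.-1 (f k.-1 z) 0
         | None => Root
         end)
      else
        match ppo p (Phi k) x with
        | Some z => Pt k (f k z) (1 - lam)
        | None => Root
        end
  end.

End Morphism.

Arguments is_morphism {X} p {Y} q Phi f.
Arguments hatf {X} p {Y} Phi f t {R} a.

(* Let r be the piecewise affine map sending [t_k, t_(k+1)] onto [k-1, k] and
   [0, t_1] to 0.  Then d(w, \hat f a) = r(d(v, a)); r is nondecreasing and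
   1-Lipschitz because t_(k+1) - t_k >= 1.  The compatibility of the f_k along
   the t_k shows that if the arcs [v, a] and [v, b] share a segment of length G,
   then the arcs [w, \hat f a] and [w, \hat f b] share one of length r(G).
   Writing |a| = d(v, a) and (a|b) for the common length, the tree formula gives
   d(\hat f a, \hat f b) <= r|a| + r|b| - 2 r(a|b) <= |a| + |b| - 2 (a|b). *)

From HB Require Import structures.
From mathcomp Require Import all_boot all_order all_algebra.
From mathcomp Require Import boolp reals.
From mathcomp Require Import ring lra zify.
Set Implicit Arguments. Unset Strict Implicit. Unset Printing Implicit Defensive.
Import Order.TTheory GRing.Theory Num.Theory.

Section Projections.
Variables (X : nat -> Type) (p : forall n, X n.+1 -> X n).

Lemma pp_irr n m (H H' : (n <= m)%N) x : pp p n m H x = pp p n m H' x.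
Proof. by rewrite (bool_irrelevance H H'). Qed.

Lemma pp_pk n k (H : (n <= k + n)%N) x : pp p n (k + n) H x = @pk X p n k x.
Proof.
rewrite /pp; move: (esym (subnK H)); rewrite addnK => e.
by rewrite (eq_irrelevance e erefl).
Qed.

Lemma pp_id n (H : (n <= n)%N) x : pp p n n H x = x.
Proof. exact: (pp_pk (k := 0)). Qed.

Lemma pp_S j m (H : (j <= m.+1)%N) (H' : (j <= m)%N) x :
  pp p j m.+1 H x = pp p j m H' (p x).
Proof.
have pp_Sk k (Hk : (j <= (k + j).+1)%N) (Hk' : (j <= k + j)%N) y :
    pp p j (k + j).+1 Hk y = pp p j (k + j) Hk' (p y).
  by rewrite (pp_pk (k := k.+1)) pp_pk.
by have := @pp_Sk (m - j); rewrite subnK.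
Qed.

Lemma pp_comp j k n (Hjk : (j <= k)%N) (Hkn : (k <= n)%N) (Hjn : (j <= n)%N) x :
  pp p j k Hjk (pp p k n Hkn x) = pp p j n Hjn x.
Proof.
elim: n Hkn Hjn x => [|n IH] Hkn Hjn x.
  have k0 : k = 0 by apply/eqP; rewrite -leqn0.
  by subst k; rewrite pp_id (pp_irr Hjk Hjn).
have [Hk | Hk] := ltnP k n.+1.
  have Hkn' : (k <= n)%N := Hk.
  have Hjn' : (j <= n)%N := leq_trans Hjk Hkn'.
  by rewrite (pp_S Hkn Hkn') (pp_S Hjn Hjn') IH.
have kE : k = n.+1 by apply/eqP; rewrite eqn_leq Hkn.
by subst k; rewrite pp_id (pp_irr Hjk Hjn).
Qed.

Lemma ppoE j m (H : (j <= m)%N) (x : X m) : ppo p j x = Some (pp p j m H x).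
Proof.
rewrite /ppo.
suff: forall b (e : (j <= m)%N = b),
  (if b as b' return ((j <= m)%N = b' -> option (X j))
   then fun H0 => Some (pp p j m H0 x) else fun _ => None) e = Some (pp p j m H x).
  by apply.
case=> e; first by rewrite (pp_irr e H).
by have := H; rewrite e.
Qed.

Lemma common_level_ge n m (x : X n) (y : X m) L : (1 <= L)%N -> (L <= minn n m)%N ->
  ppo p L x = ppo p L y -> (L <= common_level p x y)%N.
Proof.
move=> L1 Lmin agree; rewrite /common_level.
apply: (@leq_bigmax_seq nat _ (fun j => (0 < j)%N && `[< ppo p j x = ppo p j y >])).
  by rewrite mem_index_iota.
by rewrite L1; apply/asboolP.
Qed.

Lemma ppo_agree j n m (Hn : (j <= n)%N) (Hm : (j <= m)%N) (x : X n) (y : X m) :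
  ppo p j x = ppo p j y -> pp p j n Hn x = pp p j m Hm y.
Proof. by rewrite (ppoE Hn) (ppoE Hm) => -[]. Qed.

Lemma common_levelP n m (x : X n) (y : X m) (c := common_level p x y) :
  c = 0%N \/ [/\ (c <= n)%N, (c <= m)%N & ppo p c x = ppo p c y].
Proof.
rewrite /c /common_level big_seq_cond.
apply: (big_ind (fun c => c = 0%N \/ [/\ (c <= n)%N, (c <= m)%N & ppo p c x = ppo p c y])).
- by left.
- by move=> a b Ha Hb; case: (leqP a b).
- move=> i /andP[]; rewrite mem_index_iota => /andP[_ Hi] /andP[_ /asboolP agree].
  by right; move: Hi; rewrite ltnS leq_min => /andP[].
Qed.

End Projections.

Local Open Scope ring_scope.

Lemma affine_frac_bounds (R : realFieldType) (a b u : R) :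
  1 <= b - a -> a <= u < b ->
  let lam := (u - a) / (b - a) in
  [/\ 0 <= lam, lam < 1, lam <= u - a & 1 - lam <= b - u].
Proof.
move=> D1 /andP[au ub] lam; have D0 : 0 < b - a by lra.
have lamE : lam * (b - a) = u - a by rewrite /lam divfK // gt_eqF.
have lam0 : 0 <= lam by apply: divr_ge0; lra.
have lam1 : lam < 1 by rewrite /lam ltr_pdivrMr //; lra.
split=> //; nra.
Qed.

Section Rescaling.
Variables (R : realType) (t : nat -> nat).
Hypothesis t1_gt0 : (0 < t 1)%N.
Hypothesis t_ltS : forall j, (1 <= j)%N -> (t j < t j.+1)%N.

Lemma t_addn j j' : (1 <= j)%N -> (j <= j')%N -> (t j + (j' - j) <= t j')%N.
Proof.
move=> j1; elim: j' => [|j' IH]; first by rewrite leqn0 => /eqP jE; subst j.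
rewrite leq_eqVlt => /orP[/eqP <-|jj']; first by rewrite subnn addn0.
have := IH jj'; have := t_ltS (leq_trans j1 jj'); rewrite subSn //; lia.
Qed.

Lemma t_mono j j' : (1 <= j)%N -> (j <= j')%N -> (t j <= t j')%N.
Proof. by move=> j1 jj'; have := t_addn j1 jj'; lia. Qed.

Lemma leq_t j : (1 <= j)%N -> (j <= t j)%N.
Proof. by move=> j1; have := t_addn (leqnn 1) j1; lia. Qed.

Lemma t_gap_ge1 k : (1 <= k)%N -> 1 <= (t k.+1)%:R - (t k)%:R :> R.
Proof. by move=> k1; rewrite -natrB ?ler1n; have := t_ltS k1; lia. Qed.

Definition at_level (k : nat) (d : R) :=
  (k = 0%N \/ (t k)%:R <= d) /\ d < (t k.+1)%:R.

Definition rescale (k : nat) (d : R) : R :=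
  if k == 0%N then 0
  else (k.-1)%:R + (d - (t k)%:R) / ((t k.+1)%:R - (t k)%:R).

Lemma at_level_mono k k' d d' :
  at_level k d -> at_level k' d' -> d <= d' -> (k <= k')%N.
Proof.
move=> [[->//|tk] _] [_ tk'] dd'; rewrite leqNgt; apply/negP => k'k.
have : (t k'.+1)%:R <= (t k)%:R :> R by rewrite ler_nat t_mono.
lra.
Qed.

Lemma rescale_frac_bounds k d : (1 <= k)%N -> at_level k d ->
  let lam := rescale k d - (k.-1)%:R in
  [/\ 0 <= lam, lam < 1, lam <= d - (t k)%:R & 1 - lam <= (t k.+1)%:R - d].
Proof.
move=> k1 [[k0|tk] dt] lam; first by rewrite k0 in k1.
rewrite /lam /rescale gtn_eqF // addrC addKr.
by apply: affine_frac_bounds; rewrite ?t_gap_ge1 ?tk.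
Qed.

Lemma rescale_bounds k d : at_level k d -> (k.-1)%:R <= rescale k d <= k%:R.
Proof.
case: (posnP k) => [->|k1]; first by rewrite /rescale lexx.
move=> kd; have [lam0 lam1 _ _] := rescale_frac_bounds k1 kd.
have kE : k%:R = (k.-1)%:R + 1 :> R by rewrite natr1 prednK.
rewrite kE; apply/andP; split; lra.
Qed.

Lemma rescale_upper_slack k d :
  at_level k d -> k%:R - rescale k d <= (t k.+1)%:R - d.
Proof.
case: (posnP k) => [->|k1] kd.
  by case: kd => _; rewrite /rescale /=; lra.
have [_ _ _ slack] := rescale_frac_bounds k1 kd.
have kE : k%:R = (k.-1)%:R + 1 :> R by rewrite natr1 prednK.
lra.
Qed.

Lemma rescale_same_level k d d' : at_level k d -> at_level k d' -> d <= d' ->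
  rescale k d <= rescale k d' /\ rescale k d' - rescale k d <= d' - d.
Proof.
case: (posnP k) => [->|k1] kd kd' dd'; first by rewrite /rescale /=; lra.
have D1 := t_gap_ge1 k1.
have D0 : (t k.+1)%:R - (t k)%:R != 0 :> R by rewrite gt_eqF //; lra.
have diffE : rescale k d' - rescale k d = (d' - d) / ((t k.+1)%:R - (t k)%:R).
  by rewrite /rescale gtn_eqF //; field.
have qE := divfK D0 (d' - d).
have q0 : 0 <= (d' - d) / ((t k.+1)%:R - (t k)%:R) by apply: divr_ge0; lra.
by rewrite -subr_ge0 diffE; split=> //; nra.
Qed.

Lemma rescale_lipschitz k k' d d' : at_level k d -> at_level k' d' -> d <= d' ->
  rescale k d <= rescale k' d' /\ rescale k' d' - rescale k d <= d' - d.
Proof.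
move=> kd kd' dd'.
have := at_level_mono kd kd' dd'; rewrite leq_eqVlt => /orP[/eqP kk'|kk'].
  by subst k'; apply: rescale_same_level.
have k'1 : (1 <= k')%N by apply: leq_ltn_trans kk'.
have kk'1 : (k <= k'.-1)%N by rewrite -ltnS prednK.
have [_ rk] := andP (rescale_bounds kd); have [rk' _] := andP (rescale_bounds kd').
have kk'R : k%:R <= (k'.-1)%:R :> R by rewrite ler_nat.
split; first lra.
have [_ _ lower _] := rescale_frac_bounds k'1 kd'.
have upper := rescale_upper_slack kd.
have gaps : (t k.+1 + (k'.-1 - k) <= t k')%N by have := t_addn (ltn0Sn k) kk'; lia.
rewrite -(ler_nat R) natrD natrB // in gaps.
lra.
Qed.

(* The level index in exactly the form computed by [hatf]. *)
Definition level_count (N : nat) (d : R) : nat :=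
  (\sum_(1 <= j < N.+1) (((t j)%:R <= d)%R : nat))%N.

Lemma level_countP N d : (level_count N d <= N)%N /\
  forall j, (1 <= j)%N -> (j <= N)%N -> ((t j)%:R <= d) = (j <= level_count N d)%N.
Proof.
elim: N => [|N [IH1 IH2]]; first by rewrite /level_count big_geq //; split=> // j; lia.
rewrite /level_count big_nat_recr //= -/(level_count N d).
have [tN|tN] /= := boolP ((t N.+1)%:R <= d); last first.
  rewrite addn0; split=> [|j j1]; first lia.
  rewrite leq_eqVlt => /orP[/eqP->|jN]; last exact: IH2.
  by rewrite (negbTE tN); apply/esym/negbTE; rewrite -ltnNge; lia.
have below j : (1 <= j)%N -> (j <= N.+1)%N -> (t j)%:R <= d.
  by move=> j1 jN; apply: le_trans tN; rewrite ler_nat t_mono.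
have -> : level_count N d = N.
  case: (posnP N) => [N0|N1]; first by move: IH1; rewrite N0 leqn0 => /eqP.
  by apply/eqP; rewrite eqn_leq IH1 -IH2 // below.
by rewrite addn1; split=> // j j1 jN; rewrite below.
Qed.

Lemma at_level_count N d : d <= N%:R -> at_level (level_count N d) d.
Proof.
move=> dN; have [kN kP] := level_countP N d.
set k := level_count N d in kN kP *; split.
  by case: (posnP k) => [->|k1]; [left | right; rewrite kP].
have [kN'|Nk] := leqP k.+1 N; first by rewrite ltNge kP // ltnn.
have -> : k = N by lia.
by apply: le_lt_trans dN _; rewrite ltr_nat; have := leq_t (ltn0Sn N); lia.
Qed.
End Rescaling.

Lemma ler_nat_minn (R : numDomainType) (z : R) a b :
  z <= a%:R -> z <= b%:R -> z <= (minn a b)%:R.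
Proof. by rewrite /minn; case: ifP. Qed.

Section TreeDepth.
Variables (R : realType) (X : nat -> Type) (p : forall n, X n.+1 -> X n).

Lemma depth_bounded (a : point X R) : valid_point a ->
  exists N : nat, 0 <= depth a <= N%:R.
Proof.
case: a => [|n x s] /=; first by exists 0%N; rewrite lexx.
move=> [n1 [s0 s1]]; exists n; have n1R : 1 <= n%:R :> R by rewrite ler1n.
apply/andP; split; lra.
Qed.

Lemma gromov_le_depth (a b : point X R) : valid_point a -> valid_point b ->
  gromov p a b <= depth a /\ gromov p a b <= depth b.
Proof.
move=> va vb.
have [Na /andP[a0 _]] := depth_bounded va; have [Nb /andP[b0 _]] := depth_bounded vb.
case: a b va vb a0 b0 => [|n x s] [|m y s'] //= _ _ a0 b0.
by rewrite !ge_min !lexx /= ?orbT.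
Qed.

End TreeDepth.

Section HatMap.
Variables (R : realType) (X : nat -> Type) (p : forall n, X n.+1 -> X n).
Variables (Y : nat -> Type) (q : forall n, Y n.+1 -> Y n).
Variables (Phi : nat -> nat) (f : forall n, X (Phi n) -> Y n) (t : nat -> nat).
Arguments f : clear implicits.
Hypothesis Ht1 : (Phi 1 < t 1)%N /\ (Phi 2 < t 1)%N.
Hypothesis Htk : forall k, (2 <= k)%N -> (t k.-1 < t k)%N /\ (Phi k.+1 < t k)%N.
Hypothesis Hcompat : forall k i, (1 <= i)%N -> (i <= k)%N ->
  forall (Hi : (Phi i <= t k)%N) (Hk : (Phi k.+1 <= t k)%N)
         (Hik : (i <= k.+1)%N) (z : X (t k)),
    f i (pp p (Phi i) (t k) Hi z) = pp q i k.+1 Hik (f k.+1 (pp p (Phi k.+1) (t k) Hk z)).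

Lemma t1_gt0 : (0 < t 1)%N.
Proof. by case: Ht1; lia. Qed.

Lemma t_ltS j : (1 <= j)%N -> (t j < t j.+1)%N.
Proof. by move=> j1; case: (Htk (k := j.+1) j1). Qed.

Lemma Phi_succ_lt_t i : (1 <= i)%N -> (Phi i.+1 < t i)%N.
Proof. by case: i => [//|[|i]] _; [case: Ht1 | case: (Htk (k := i.+2) isT)]. Qed.

Lemma Phi_lt_t j : (1 <= j)%N -> (Phi j < t j)%N.
Proof.
case: j => [//|[|i]] _; first by case: Ht1.
by have := Phi_succ_lt_t (ltn0Sn i); have := t_ltS (ltn0Sn i); lia.
Qed.

Lemma f_proj_compat m L n (x : X n) (Hm : (Phi m <= n)%N) (HL : (Phi L <= n)%N)
  (L1 : (1 <= L)%N) (Lm : (L <= m)%N) (tm : (t m <= n)%N) :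
  pp q L m Lm (f m (pp p (Phi m) n Hm x)) = f L (pp p (Phi L) n HL x).
Proof.
have [Lm'|mL] := ltnP L m; last first.
  have mE : m = L by apply/eqP; rewrite eqn_leq mL Lm.
  by subst m; rewrite pp_id (pp_irr _ Hm HL).
case: m Hm Lm tm Lm' => [//|j] Hm Lm tm Lj.
have j1 : (1 <= j)%N := leq_trans L1 Lj.
have tj : (t j <= n)%N by have := t_ltS j1; lia.
have PhiL : (Phi L <= t j)%N.
  by have := Phi_lt_t L1; have := t_mono t1_gt0 t_ltS L1 Lj; lia.
have Phij : (Phi j.+1 <= t j)%N by have := Phi_succ_lt_t j1; lia.
have := Hcompat L1 Lj PhiL Phij Lm (pp p (t j) n tj x).
by rewrite !pp_comp => <-; apply: congr1; apply: pp_irr.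
Qed.

Lemma hatf_cases n (x : X n) (s : R) : valid_point (Pt n x s) ->
  let d := n%:R - s in
  exists2 k, at_level t k d &
  (hatf p Phi f t (Pt n x s) = Root /\ rescale t k d = 0) \/
  exists m s' (Hm : (Phi m <= n)%N),
    [/\ (1 <= m)%N, (t m <= n)%N, 0 <= s', m%:R - s' = rescale t k d &
        hatf p Phi f t (Pt n x s) = Pt m (f m (pp p (Phi m) n Hm x)) s'].
Proof.
move=> [n1 [s0 s1]] d.
have dn : d <= n%:R by rewrite /d; lra.
have kd := at_level_count t1_gt0 t_ltS dn.
exists (level_count t n d) => //.
rewrite /hatf -/d -/(level_count t n d); set k := level_count t n d in kd *.
have [k0|k1] := posnP k; first by left; rewrite k0 /rescale.
have [lam0 lam1 _ _] := rescale_frac_bounds t1_gt0 t_ltS k1 kd.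
move: lam0 lam1; rewrite /rescale gtn_eqF // addrC addKr => lam0 lam1.
have tk : (t k <= n)%N.
  case: kd => [[k0|tkd] _]; first by rewrite k0 in k1.
  by rewrite -(ler_nat R); lra.
set lam := (d - (t k)%:R) / _ in lam0 lam1 *.
have [lamE|lam_neq0] := eqVneq lam 0.
  rewrite lamE addr0.
  have [kE|k_neq1] := eqVneq k 1%N; first by left; rewrite kE.
  have k'1 : (1 <= k.-1)%N by lia.
  have Hm : (Phi k.-1 <= n)%N.
    by have := Phi_lt_t k'1; have := t_mono t1_gt0 t_ltS k'1 (leq_pred k); lia.
  rewrite (ppoE p Hm); right; exists k.-1, 0, Hm; split=> //; rewrite ?lexx //.
  - by have := t_mono t1_gt0 t_ltS k'1 (leq_pred k); lia.
  - by rewrite subr0.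
have Hk : (Phi k <= n)%N by have := Phi_lt_t k1; lia.
rewrite (ppoE p Hk); right; exists k, (1 - lam), Hk; split=> //; first lra.
have kE : k%:R = (k.-1)%:R + 1 :> R by rewrite natr1 prednK.
by rewrite kE; lra.
Qed.

Lemma depth_hatf (a : point X R) : valid_point a ->
  exists2 k, at_level t k (depth a) & depth (hatf p Phi f t a) = rescale t k (depth a).
Proof.
case: a => [|n x s] va.
  by exists 0%N => //; split; [left | rewrite /= ltr0n t1_gt0].
have [k kd [[hE rE]|[m [s' [Hm [_ _ _ mE hE]]]]]] := hatf_cases va;
  by exists k => //; rewrite hE /= ?rE ?mE.
Qed.

Lemma common_level_hatf na nb (xa : X na) (xb : X nb) ma mb
    (Ha : (Phi ma <= na)%N) (Hb : (Phi mb <= nb)%N) L :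
  (1 <= L)%N -> (L <= minn ma mb)%N -> (t ma <= na)%N -> (t mb <= nb)%N ->
  (t L <= common_level p xa xb)%N ->
  (L <= common_level q (f ma (pp p (Phi ma) na Ha xa)) (f mb (pp p (Phi mb) nb Hb xb)))%N.
Proof.
move=> L1 Lm tma tmb tLc; apply: common_level_ge => //.
have Lma : (L <= ma)%N by move: Lm; rewrite leq_min => /andP[].
have Lmb : (L <= mb)%N by move: Lm; rewrite leq_min => /andP[].
have PhiLc : (Phi L <= common_level p xa xb)%N by have := Phi_lt_t L1; lia.
have [c0|[cna cnb agree]] := common_levelP p xa xb.
  by move: PhiLc; rewrite c0; have := Phi_lt_t L1; lia.
have PhiLa := leq_trans PhiLc cna; have PhiLb := leq_trans PhiLc cnb.
rewrite (ppoE q Lma) (ppoE q Lmb) (f_proj_compat xa Ha PhiLa L1 Lma tma)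
  (f_proj_compat xb Hb PhiLb L1 Lmb tmb).
by rewrite -(pp_comp p PhiLc cna) -(pp_comp p PhiLc cnb) (ppo_agree cna cnb agree).
Qed.

Lemma rescale_gromov_le (a b : point X R) k : valid_point a -> valid_point b ->
  let G := gromov p a b in at_level t k G ->
  rescale t k G <= depth (hatf p Phi f t a) ->
  rescale t k G <= depth (hatf p Phi f t b) ->
  rescale t k G <= gromov q (hatf p Phi f t a) (hatf p Phi f t b).
Proof.
move=> va vb G kG; set r := rescale t k G.
case: a va @G kG @r => [|na xa sa] va G kG r //.
have [ka _ [[-> _]|[ma [sa' [Ha [ma1 tma sa0 _ ->]]]]]] := hatf_cases va => //.
case: b vb @G kG @r => [|nb xb sb] vb G kG r //.
have [kb _ [[-> _]|[mb [sb' [Hb [mb1 tmb sb0 _ ->]]]]]] := hatf_cases vb => //.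
rewrite /gromov [depth (Pt ma _ _)]/= [depth (Pt mb _ _)]/= !le_min => ra rb; rewrite ra rb /=.
have [_ rk] := andP (rescale_bounds t1_gt0 t_ltS kG).
set L := minn k (minn ma mb).
have rL : r <= L%:R by rewrite /L !ler_nat_minn //; lra.
apply: (le_trans rL); rewrite ler_nat.
have [L0|L1] := posnP L; first by rewrite L0.
have Lk : (L <= k)%N by rewrite geq_minl.
have Lm : (L <= minn ma mb)%N by rewrite geq_minr.
have k1 : (1 <= k)%N := leq_trans L1 Lk.
have tkG : (t k)%:R <= G by case: kG => [[k0|//] _]; rewrite k0 in k1.
have Gc : G <= (common_level p xa xb)%:R by rewrite /G /gromov !ge_min lexx !orbT.
apply: common_level_hatf => //.
have := t_mono t1_gt0 t_ltS L1 Lk; suff : (t k <= common_level p xa xb)%N by lia.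
by rewrite -(ler_nat R); lra.
Qed.
End HatMap.

Theorem proposition4p2p1
  (R : realType)
  (X : nat -> Type) (p : forall n, X n.+1 -> X n)
  (Y : nat -> Type) (q : forall n, Y n.+1 -> Y n)
  (Phi : nat -> nat) (f : forall n, X (Phi n) -> Y n)
  (t : nat -> nat)
  (Hmor : is_morphism p q Phi f)
  (Ht1 : (Phi 1 < t 1)%N /\ (Phi 2 < t 1)%N)
  (Htk : forall k, (2 <= k)%N -> (t k.-1 < t k)%N /\ (Phi k.+1 < t k)%N)
  (Hcompat : forall k i, (1 <= i)%N -> (i <= k)%N ->
     forall (Hi : (Phi i <= t k)%N) (Hk : (Phi k.+1 <= t k)%N)
            (Hik : (i <= k.+1)%N) (z : X (t k)),
       f i (pp p (Phi i) (t k) Hi z) = pp q i k.+1 Hik (f k.+1 (pp p (Phi k.+1) (t k) Hk z))) :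
  forall a b : point X R, valid_point a -> valid_point b ->
    (tdist q (hatf p Phi f t a) (hatf p Phi f t b) <= tdist p a b)%R.
Proof.
move=> a b va vb.
have t1 := t1_gt0 Ht1; have tS := t_ltS Htk.
have [ka kda Ea] := depth_hatf p f Ht1 Htk va.
have [kb kdb Eb] := depth_hatf p f Ht1 Htk vb.
have [Ga Gb] := gromov_le_depth p va vb.
have [N /andP[_ aN]] := depth_bounded va.
have kG := at_level_count t1 tS (le_trans Ga aN).
have [mona lipa] := rescale_lipschitz t1 tS kG kda Ga.
have [monb lipb] := rescale_lipschitz t1 tS kG kdb Gb.
have := rescale_gromov_le Ht1 Htk Hcompat va vb kG.
rewrite Ea Eb => /(_ mona monb).
by rewrite /tdist Ea Eb; lra.
Qed.
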